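(* Let $V$ and $V'$ be left vector spaces over fields $K$ and $K'$ respectively (arbitrary, possibly infinite, dimensions), with $\mathcal G\neq\emptyset$ and $\mathcal G'\neq\emptyset$. If $\phi:\mathcal G\to\mathcal G'$ is an isomorphism of distant graphs (a bijection such that for all $X,Y\in\mathcal G$: $X\oplus Y=V$ if and only if $X^\phi\oplus Y^\phi=V'$), then $\phi$ is also an isomorphism of Grassmann graphs (for all $X,Y\in\mathcal G$: $X\sim Y$ if and only if $X^\phi\sim Y^\phi$).
   Context: Fields are not necessarily commutative (division rings). For a left vector space $V$ over $K$, $\mathcal G$ denotes the set of all subspaces $X\le V$ such that $X$ is isomorphic to $V/X$; $\mathcal G'$ is defined likewise for $V'$. Two elements $X,Y\in\mathcal G$ are distant if $X\oplus Y=V$. They are adjacent ($X\sim Y$) if $\dim((X+Y)/X)=\dim((X+Y)/Y)=1$. The distant graph on $\mathcal G$ has vertex set $\mathcal G$ and edges the unordered pairs of distant elements; the Grassmann graph on $\mathcal G$ has vertex set $\mathcal G$ and edges the pairs of adjacent elements. *)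

(* Division rings: unitRingType in which every nonzero element
   is a unit; left vector spaces: lmodType K (left scalar action *:). *)
From HB Require Import structures.
From mathcomp Require Import all_boot all_order all_algebra.
Set Implicit Arguments. Unset Strict Implicit. Unset Printing Implicit Defensive.
Import GRing.Theory.
Local Open Scope ring_scope.

Definition division_ring (K : unitRingType) : Prop :=
  forall x : K, x != 0 -> x \is a GRing.unit.

Section Subspaces.
Variables (K : unitRingType) (V : lmodType K).

Definition subspace (X : V -> Prop) : Prop :=
  [/\ X 0, (forall u v, X u -> X v -> X (u + v)) & (forall (a : K) v, X v -> X (a *: v))].

Definition sumsp (X Y : V -> Prop) : V -> Prop :=
  fun v => exists x y, [/\ X x, Y y & v = x + y].

Definition span1 (v : V) : V -> Prop := fun w => exists a : K, w = a *: v.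

(* X is isomorphic to V/X: there is a K-linear map V -> V with image X and
   kernel X (so that V/X ≅ im f = X by the first isomorphism theorem). *)
Definition iso_to_quotient (X : V -> Prop) : Prop :=
  exists f : V -> V,
    [/\ (forall u v, f (u + v) = f u + f v),
        (forall (a : K) v, f (a *: v) = a *: f v),
        (forall w, X w <-> exists v, w = f v) &
        (forall v, f v = 0 <-> X v)].

Definition inG (X : V -> Prop) : Prop := subspace X /\ iso_to_quotient X.

Definition Gset := {X : V -> Prop | inG X}.

Definition distant (X Y : V -> Prop) : Prop :=
  (forall v, X v -> Y v -> v = 0) /\ (forall v, sumsp X Y v).

(* dim (Z / X) = 1, for a subspace X ⊆ Z: Z/X is spanned by one nonzero class *)
Definition quot_dim1 (Z X : V -> Prop) : Prop :=
  exists v, [/\ Z v, ~ X v & forall w, Z w <-> sumsp X (span1 v) w].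

Definition adjacent (X Y : V -> Prop) : Prop :=
  quot_dim1 (sumsp X Y) X /\ quot_dim1 (sumsp X Y) Y.

End Subspaces.

(* Adjacency can be read off the distant graph.  Writing X^Δ for the set of
   complements of X in 𝒢, X ~ Y holds iff X ≠ Y and some Z ∈ 𝒢 other than X
   and Y satisfies Z^Δ ⊆ X^Δ ∪ Y^Δ.
   If X ~ Y, take x ∈ X \ Y, y ∈ Y \ X and Z = (X ∩ Y) + K(x + y).  Then X, Y,
   Z are three hyperplanes of X + Y through X ∩ Y.  A complement of Z meets
   X + Y in a line spanned by a vector outside Z, hence outside X or outside
   Y, and a complement of one hyperplane of X + Y whose trace on X + Y is a line
   outside a second hyperplane is a complement of the second one as well.
   Conversely, an element of 𝒢 is determined by its complements, so Z ≠ X, Y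
   yields some x ∈ X \ Z, and every vector of Y lies in Z + Kx (otherwise a
   complement of Z through x and that vector would be a complement of neither
   X nor Y).  A complement of Z through x is then a complement of Y whose trace
   on X + Y is Kx, so (X + Y)/Y is spanned by x; symmetrically for X.
   Complements exist by Zorn's lemma, and a bijection preserving distance
   preserves the description above, hence adjacency. *)

From mathcomp Require Import all_boot all_order all_algebra.
From mathcomp Require Import boolp classical_sets.
Set Implicit Arguments. Unset Strict Implicit. Unset Printing Implicit Defensive.
Import GRing.Theory.
Local Open Scope classical_set_scope.
Local Open Scope ring_scope.

Section Subspaces.
Variables (K : unitRingType) (V : lmodType K).
Implicit Types (A B S U W X Y Z : set V) (u v w x y z : V).

Definition disjointsp X Y := forall v, X v -> Y v -> v = 0.

Lemma subspace0 X : subspace X -> X 0. Proof. by case. Qed.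

Lemma subspaceD X u v : subspace X -> X u -> X v -> X (u + v).
Proof. by case=> _ + _; apply. Qed.

Lemma subspaceZ X (a : K) v : subspace X -> X v -> X (a *: v).
Proof. by case=> _ _; apply. Qed.

Lemma subspaceN X v : subspace X -> X v -> X (- v).
Proof. by move=> sX Xv; rewrite -scaleN1r; apply: subspaceZ. Qed.

Lemma subspaceB X u v : subspace X -> X u -> X v -> X (u - v).
Proof. by move=> sX Xu Xv; apply: subspaceD => //; apply: subspaceN. Qed.

Lemma subspace_zero : subspace (@set1 V 0).
Proof.
by split=> [|_ _ -> ->|a _ ->]; rewrite ?addr0 ?scaler0.
Qed.

Lemma subspaceT : subspace [set: V]. Proof. by []. Qed.

Lemma subspaceI X Y : subspace X -> subspace Y -> subspace (X `&` Y).
Proof.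
move=> sX sY; split; first by split; apply: subspace0.
- by move=> u v [Xu Yu] [Xv Yv]; split; apply: subspaceD.
- by move=> a v [Xv Yv]; split; apply: subspaceZ.
Qed.

Lemma span1_subspace u : subspace (span1 u).
Proof.
split; first by exists 0; rewrite scale0r.
- by move=> _ _ [a ->] [b ->]; exists (a + b); rewrite scalerDl.
- by move=> a _ [b ->]; exists (a * b); rewrite scalerA.
Qed.

Lemma span1_id u : span1 u u. Proof. by exists 1; rewrite scale1r. Qed.

Lemma span1_sub S u : subspace S -> S u -> span1 u `<=` S.
Proof. by move=> sS Su _ [a ->]; apply: subspaceZ. Qed.

Lemma sumsp_subspace X Y : subspace X -> subspace Y -> subspace (sumsp X Y).
Proof.
move=> sX sY; split.
- by exists 0, 0; rewrite addr0; split => //; apply: subspace0.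
- move=> _ _ [x1 [y1 [X1 Y1 ->]]] [x2 [y2 [X2 Y2 ->]]].
  by exists (x1 + x2), (y1 + y2); split; [apply: subspaceD..|rewrite addrACA].
- move=> a _ [x1 [y1 [X1 Y1 ->]]]; exists (a *: x1), (a *: y1).
  by split; [apply: subspaceZ..|rewrite scalerDr].
Qed.

Lemma sumsp_l X Y : subspace Y -> X `<=` sumsp X Y.
Proof. by move=> sY v Xv; exists v, 0; rewrite addr0; split => //; apply: subspace0. Qed.

Lemma sumsp_r X Y : subspace X -> Y `<=` sumsp X Y.
Proof. by move=> sX v Yv; exists 0, v; rewrite add0r; split => //; apply: subspace0. Qed.

Lemma sumspC X Y : sumsp X Y = sumsp Y X.
Proof.
by apply/seteqP; split=> _ [a [b [Xa Yb ->]]]; exists b, a; rewrite addrC.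
Qed.

Lemma sumsp_sub S X Y : subspace S -> X `<=` S -> Y `<=` S -> sumsp X Y `<=` S.
Proof. by move=> sS XS YS _ [x [y [Xx Yy ->]]]; apply: (subspaceD sS); [apply: XS|apply: YS]. Qed.

Lemma distantC X Y : distant X Y -> distant Y X.
Proof. by case=> XY XYs; split=> [v Yv Xv|v]; [apply: XY|rewrite sumspC]. Qed.

Lemma distant_sub_eq A B W : subspace B -> A `<=` B -> distant A W -> distant B W -> A = B.
Proof.
move=> sB AB [_ AWs] [BW _]; apply/seteqP; split=> // b Bb.
have [a [w [Aa Ww ebw]]] := AWs b.
have ew : w = b - a by rewrite ebw addrC addKr.
have w0 : w = 0 by apply: BW => //; rewrite ew; apply: subspaceB => //; apply: AB.
by rewrite ebw w0 addr0.
Qed.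

Lemma distant_meet_span1 A W S w : subspace W -> distant A W -> W w ->
  S `<=` sumsp A (span1 w) -> W `&` S `<=` span1 w.
Proof.
move=> sW [AW _] Ww SAw v [Wv /SAw [a [_ [Aa [c ->] eav]]]]; exists c.
have ea : a = v - c *: w by rewrite eav addrK.
have a0 : a = 0 by apply: AW => //; rewrite ea; apply: subspaceB => //; apply: subspaceZ.
by rewrite eav a0 add0r.
Qed.

Lemma sub_sumsp_of_distant S Y W w : subspace S -> Y `<=` S -> distant Y W ->
  W `&` S `<=` span1 w -> S `<=` sumsp Y (span1 w).
Proof.
move=> sS YS [_ YWs] WSw v Sv; have [y [w' [Yy Ww' ev]]] := YWs v.
exists y, w'; split => //; apply: WSw; split => //.
have -> : w' = v - y by rewrite ev addrC addKr.
by apply: subspaceB => //; apply: YS.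
Qed.

Lemma sub_sumsp_meet X Y y : subspace Y -> Y y -> Y `<=` sumsp X (span1 y) ->
  Y `<=` sumsp (X `&` Y) (span1 y).
Proof.
move=> sY Yy YXy v Yv; have [x [_ [Xx [c ->] ev]]] := YXy v Yv.
exists x, (c *: y); split => //; last by exists c.
split => //; have -> : x = v - c *: y by rewrite ev addrK.
by apply: subspaceB => //; apply: subspaceZ.
Qed.

Lemma subspace_bigcup_chain (F : set (set V)) : F !=set0 ->
  (forall X, F X -> subspace X) -> total_on F subset -> subspace (\bigcup_(X in F) X).
Proof.
move=> [X0 FX0] sF tF; split; first by exists X0 => //; apply: subspace0; apply: sF.
- move=> u v [X FX Xu] [Y FY Yv].
  case: (tF X Y FX FY) => [XY|YX].
  + by exists Y => //; apply: (subspaceD (sF _ FY)) => //; apply: XY.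
  + by exists X => //; apply: (subspaceD (sF _ FX)) => //; apply: YX.
- by move=> a v [X FX Xv]; exists X => //; apply: subspaceZ (sF _ FX) Xv.
Qed.

Lemma exists_maximal_disjoint A B U : subspace B -> B `<=` U -> disjointsp A B ->
  exists W, [/\ subspace W, B `<=` W, W `<=` U, disjointsp A W &
    forall W', subspace W' -> W `<=` W' -> W' `<=` U -> disjointsp A W' -> W' `<=` W].
Proof.
move=> sB BU AB.
pose P W := [/\ subspace W, B `<=` W, W `<=` U & disjointsp A W].
have PB : P B by split.
pose R (s t : {W | P W}) := `[< sval s `<=` sval t >].
have [[W [sW BW WU AW]] Wmax] : exists t, premaximal R t.
  apply: (ZL_preorder (exist P B PB)) => [s|r s t /asboolP rs /asboolP st|C Ctot].
  - exact/asboolP.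
  - by apply/asboolP; apply: subset_trans rs st.
  (* [B] joins the chain so that the union is a subspace even for an empty chain. *)
  pose F := [set sval s | s in C] `|` [set B].
  have FP X : F X -> P X by case=> [[[Y PY] _ <-]|->].
  have tF : total_on F subset.
    move=> _ _ [[s Cs <-]|->] [[t Ct <-]|->].
    - by case: (Ctot s t Cs Ct) => /asboolP; [left|right].
    - by right; case: (FP (sval s)) => //; left; exists s.
    - by left; case: (FP (sval t)) => //; left; exists t.
    - by left.
  have PF : P (\bigcup_(X in F) X).
    split.
    - apply: subspace_bigcup_chain tF; first by exists B; right.
      by move=> X /FP [].
    - by apply: bigcup_sup; right.
    - by move=> v [X /FP [_ _ XU _] /XU].
    - by move=> v Av [X /FP [_ _ _ AX] /(AX v Av)].
  exists (exist P _ PF) => s Cs; apply/asboolP.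
  by apply: (@bigcup_sup _ _ (sval s) F id); left; exists s.
exists W; split => // W' sW' WW' W'U AW'.
have PW' : P W' by split => //; apply: subset_trans BW WW'.
by have /asboolP := Wmax (exist P W' PW') (asboolT WW').
Qed.

Lemma inG_complement A B : inG A -> subspace B -> distant A B -> inG B.
Proof.
move=> [sA [f [fD fZ fim fker]]] sB [AB ABs]; split => //.
have f0 : f 0 = 0 by apply/fker; apply: subspace0 sA.
have fB u v : f (u - v) = f u - f v by rewrite fD -scaleN1r fZ scaleN1r.
(* [f] maps [B] isomorphically onto [A]; [Q v b] says that [f b] is the
   [A]-component of [v], so [g] inverts [f] after projecting onto [A]. *)
pose Q v b := B b /\ B (v - f b).
have Qex v : exists b, Q v b.
  have [a [b' [Aa Bb' ->]]] := ABs v.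
  have [u ->] := (fim a).1 Aa.
  have [a' [b [Aa' Bb ->]]] := ABs u.
  by exists b; split=> //; rewrite fD (fker a').2 // add0r addrAC subrr add0r.
have Quniq v b1 b2 : Q v b1 -> Q v b2 -> b1 = b2.
  move=> [B1 B1'] [B2 B2'].
  have e : f b1 - f b2 = (v - f b2) - (v - f b1) by rewrite [RHS]addrC opprB addrA subrK.
  have f12 : f b1 - f b2 = 0.
    by apply: AB; [apply/fim; exists (b1 - b2); rewrite fB|rewrite e; apply: subspaceB].
  have /AB /(_ (subspaceB sB B1 B2)) /eqP : A (b1 - b2) by apply/fker; rewrite fB f12.
  by rewrite subr_eq0 => /eqP.
have [g gQ] := choice Qex.
exists g; split.
- move=> u v; apply: (Quniq (u + v) _ _ (gQ _)).
  have [Bu Bu'] := gQ u; have [Bv Bv'] := gQ v.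
  by split; [apply: subspaceD|rewrite fD opprD addrACA; apply: subspaceD].
- move=> a v; apply: (Quniq (a *: v) _ _ (gQ _)); have [Bv Bv'] := gQ v.
  by split; [apply: subspaceZ|rewrite fZ -scalerBr; apply: subspaceZ].
- move=> w; split=> [Bw|[v ->]]; last by case: (gQ v).
  exists (f w); apply/esym/(Quniq (f w) _ _ (gQ _)).
  by split=> //; rewrite subrr; apply: subspace0.
- move=> v; split=> [gv0|Bv]; first by have [_] := gQ v; rewrite gv0 f0 subr0.
  by apply: (Quniq v _ _ (gQ _)); split; [apply: subspace0|rewrite f0 subr0].
Qed.

Definition compl_in_union Z X Y :=
  forall W, inG W -> distant Z W -> distant X W \/ distant Y W.

Lemma compl_in_unionC Z X Y : compl_in_union Z X Y -> compl_in_union Z Y X.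
Proof. by move=> ZXY W GW /(ZXY W GW) []; [right|left]. Qed.

Section DivisionRing.
Hypothesis hK : division_ring K.

Lemma notin_scale_eq0 X (a : K) v : subspace X -> ~ X v -> X (a *: v) -> a = 0.
Proof.
move=> sX nXv Xav; have [//|a0] := eqVneq a 0; case: nXv.
by rewrite -[v]scale1r -(mulVr (hK a0)) -scalerA; apply: subspaceZ.
Qed.

Lemma disjointsp_span1 X u : subspace X -> ~ X u -> disjointsp X (span1 u).
Proof.
move=> sX nXu v Xv [a ev]; rewrite ev in Xv *.
by rewrite (notin_scale_eq0 sX nXu Xv) scale0r.
Qed.

Lemma disjointsp_sumsp_span1 A W u : subspace A -> subspace W -> disjointsp A W ->
  ~ sumsp A W u -> disjointsp A (sumsp W (span1 u)).
Proof.
move=> sA sW AW nAWu v Av [w [_ [Ww [c ->] ev]]].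
have [c0|c0] := eqVneq c 0.
  by rewrite ev c0 scale0r addr0 in Av *; apply: AW.
case: nAWu; exists (c^-1 *: v), (- (c^-1 *: w)); split.
- exact: subspaceZ.
- by apply: (subspaceN sW); apply: subspaceZ.
- by rewrite ev scalerDr scalerA mulVr ?hK // scale1r addrAC subrr add0r.
Qed.

Lemma sumsp_span1_exchange S X u v : subspace X -> S `<=` sumsp X (span1 v) ->
  S u -> ~ X u -> S `<=` sumsp X (span1 u).
Proof.
move=> sX SXv Su nXu; have [x [_ [Xx [c ->] eu]]] := SXv u Su.
apply: subset_trans SXv _.
have [c0|c0] := eqVneq c 0; first by case: nXu; rewrite eu c0 scale0r addr0.
have sXu := sumsp_subspace sX (span1_subspace u).
apply: (sumsp_sub sXu (sumsp_l (span1_subspace u))).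
apply: span1_sub => //; exists (- (c^-1 *: x)), (c^-1 *: u); split.
- by apply: (subspaceN sX); apply: subspaceZ.
- by exists c^-1.
- by rewrite eu scalerDr scalerA mulVr ?hK // scale1r addKr.
Qed.

Lemma quot_dim1_sub S X : quot_dim1 S X -> X `<=` S.
Proof.
move=> [v [_ _ e]] x Xx; apply/e; exists x, 0.
by split; [|exists 0; rewrite scale0r|rewrite addr0].
Qed.

Lemma quot_dim1_subspace S X : subspace X -> quot_dim1 S X -> subspace S.
Proof.
move=> sX [v [_ _ e]]; rewrite (_ : S = sumsp X (span1 v)).
  exact: sumsp_subspace (span1_subspace v).
by apply/seteqP; split=> w /e.
Qed.

Lemma quot_dim1_span1 S X u : subspace X -> quot_dim1 S X -> S u -> ~ X u ->
  S = sumsp X (span1 u).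
Proof.
move=> sX SX Su nXu; apply/seteqP; split.
  by case: (SX) => v [_ _ e]; apply: (sumsp_span1_exchange (v := v) sX _ Su nXu) => w /e.
have sS := quot_dim1_subspace sX SX.
by apply: sumsp_sub => //; [exact: quot_dim1_sub|apply: span1_sub].
Qed.

Lemma quot_dim1_intro S X u : subspace S -> X `<=` S -> S u -> ~ X u ->
  S `<=` sumsp X (span1 u) -> quot_dim1 S X.
Proof.
move=> sS XS Su nXu SXu; exists u; split => // w; split=> [/SXu //|].
by apply: sumsp_sub => //; apply: span1_sub.
Qed.

Lemma quot_dim1_witness X Y : subspace X -> quot_dim1 (sumsp X Y) X -> exists2 y, Y y & ~ X y.
Proof.
move=> sX [_ [[x [y [Xx Yy ->]]] nXxy _]]; exists y => // Xy.
by apply: nXxy; apply: subspaceD.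
Qed.

Lemma distant_exchange A B W S w : subspace A -> subspace B -> subspace W ->
  quot_dim1 S A -> quot_dim1 S B -> distant A W -> W w -> S w -> ~ A w -> ~ B w ->
  distant B W.
Proof.
move=> sA sB sW SA SB dAW Ww Sw nAw nBw.
have SAw := quot_dim1_span1 sA SA Sw nAw.
have SBw := quot_dim1_span1 sB SB Sw nBw.
have WSw : W `&` S `<=` span1 w by apply: (distant_meet_span1 sW dAW Ww); rewrite -SAw.
split.
- move=> v Bv Wv; have [c ev] := WSw v (conj Wv (quot_dim1_sub SB Bv)).
  by rewrite ev in Bv *; rewrite (notin_scale_eq0 sB nBw Bv) scale0r.
- move=> v; have [a [w' [Aa Ww' ->]]] := dAW.2 v.
  have := quot_dim1_sub SA Aa; rewrite SBw => -[b [_ [Bb [c ->] ->]]].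
  exists b, (c *: w + w'); split => //; last by rewrite addrA.
  by apply: subspaceD => //; apply: subspaceZ.
Qed.

Lemma exists_complement_between A B U : subspace A -> subspace B -> subspace U ->
  B `<=` U -> disjointsp A B ->
  exists W, [/\ subspace W, B `<=` W, W `<=` U, disjointsp A W & U `<=` sumsp A W].
Proof.
move=> sA sB sU BU AB.
have [W [sW BW WU AW Wmax]] := exists_maximal_disjoint sB BU AB.
exists W; split => // u Uu; apply: contrapT => nAWu.
have sWu := sumsp_subspace sW (span1_subspace u).
have WuU : sumsp W (span1 u) `<=` U by apply: sumsp_sub => //; apply: span1_sub.
have Wu := Wmax _ sWu (sumsp_l (span1_subspace u)) WuU
  (disjointsp_sumsp_span1 sA sW AW nAWu).
by apply: nAWu; apply: (sumsp_r sA); apply: Wu; exact: (sumsp_r sW (span1_id u)).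
Qed.

Lemma exists_complement_containing Z B : inG Z -> subspace B -> disjointsp Z B ->
  exists W, [/\ inG W, B `<=` W & distant Z W].
Proof.
move=> GZ sB ZB.
have [W [sW BW _ ZW VZW]] :=
  exists_complement_between GZ.1 sB subspaceT (subsetT B) ZB.
have dZW : distant Z W by split => // v; apply: VZW.
by exists W; split => //; apply: inG_complement GZ sW dZW.
Qed.

Lemma exists_complement_through Z u : inG Z -> ~ Z u ->
  exists W, [/\ inG W, W u & distant Z W].
Proof.
move=> GZ nZu.
have [W [GW uW dZW]] :=
  exists_complement_containing GZ (span1_subspace u) (disjointsp_span1 GZ.1 nZu).
by exists W; split => //; apply: uW; apply: span1_id.
Qed.

(* A complement H of the line through z containing Y, then a complement W of Z
   inside H: since z lies outside H, it lies outside Y + W. *)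
Lemma exists_complement_avoiding Z Y z : inG Z -> subspace Y -> Z z -> ~ Y z ->
  exists W, [/\ inG W, distant Z W & ~ sumsp Y W z].
Proof.
move=> GZ sY Zz nYz; have sZ := GZ.1.
have zY : disjointsp (span1 z) Y by move=> v zv Yv; apply: disjointsp_span1 nYz v Yv zv.
have [H [sH YH _ zH VzH]] :=
  exists_complement_between (span1_subspace z) sY subspaceT (subsetT Y) zY.
have H0 : [set 0] `<=` H by move=> _ ->; apply: subspace0.
have Z0 : disjointsp Z [set 0] by [].
have [W [sW _ WH ZW HZW]] := exists_complement_between sZ subspace_zero sH H0 Z0.
have dZW : distant Z W.
  split => // v; have [_ [h [[c ->] Hh ->]]] := VzH v I.
  have [z' [w [Zz' Ww ->]]] := HZW h Hh.
  exists (c *: z + z'), w; split => //; last by rewrite addrA.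
  by apply: subspaceD => //; apply: subspaceZ.
exists W; split => [|//|YWz]; first exact: inG_complement GZ sW dZW.
have Hz : H z by apply: sumsp_sub YWz.
by apply: nYz; rewrite (zH z (span1_id z) Hz); apply: subspace0.
Qed.

Lemma complement_eq Z Y : inG Z -> subspace Y ->
  (forall W, inG W -> distant Z W -> distant Y W) -> Z = Y.
Proof.
move=> GZ sY ZY; apply/seteqP; split=> v.
- move=> Zv; apply: contrapT => nYv.
  have [W [GW dZW nYWv]] := exists_complement_avoiding GZ sY Zv nYv.
  by apply: nYWv; apply: (ZY W GW dZW).2.
- move=> Yv; apply: contrapT => nZv.
  have [W [GW Wv dZW]] := exists_complement_through GZ nZv.
  by apply: nZv; rewrite ((ZY W GW dZW).1 v Yv Wv); apply: subspace0 GZ.1.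
Qed.

Lemma meet_sub_of_compl_in_union Z X Y : inG Z -> compl_in_union Z X Y ->
  X `&` Y `<=` Z.
Proof.
move=> GZ ZXY p [Xp Yp]; apply: contrapT => nZp.
have [W [GW Wp dZW]] := exists_complement_through GZ nZp.
have p0 : p = 0 by case: (ZXY W GW dZW) => -[XYW _]; apply: XYW.
by apply: nZp; rewrite p0; apply: subspace0 GZ.1.
Qed.

Lemma exists_notin_of_compl_in_union Z X Y : inG Z -> subspace Y -> Z <> X -> Z <> Y ->
  compl_in_union Z X Y -> exists2 x, X x & ~ Z x.
Proof.
move=> GZ sY ZX ZY ZXY; apply: contrapT => nXZ.
have XZ : X `<=` Z by move=> x Xx; apply: contrapT => nZx; apply: nXZ; exists x.
apply: ZY; apply: (complement_eq GZ sY) => W GW dZW.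
case: (ZXY W GW dZW) => // dXW.
by case: ZX; apply/esym/(distant_sub_eq GZ.1 XZ dXW dZW).
Qed.

Lemma sub_sumsp_span1_of_compl_in_union Z X Y x : inG Z -> compl_in_union Z X Y ->
  X x -> ~ Z x -> Y `<=` sumsp Z (span1 x).
Proof.
move=> GZ ZXY Xx nZx y Yy; apply: contrapT => nZxy; have sZ := GZ.1.
have [sx sy] := (span1_subspace x, span1_subspace y).
have Zxy := disjointsp_sumsp_span1 sZ sx (disjointsp_span1 sZ nZx) nZxy.
have [W [GW xyW dZW]] := exists_complement_containing GZ (sumsp_subspace sx sy) Zxy.
have Wx : W x by apply: xyW; exact: (sumsp_l sy (span1_id x)).
have Wy : W y by apply: xyW; exact: (sumsp_r sx (span1_id y)).
case: (ZXY W GW dZW) => -[XYW _].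
- by apply: nZx; rewrite (XYW x Xx Wx); apply: subspace0.
- by apply: nZxy; rewrite (XYW y Yy Wy); apply: subspace0; apply: sumsp_subspace.
Qed.

Lemma quot_dim1_of_compl_in_union Z X Y : inG X -> inG Y -> inG Z -> Z <> X -> Z <> Y ->
  compl_in_union Z X Y -> quot_dim1 (sumsp X Y) Y.
Proof.
move=> [sX _] [sY _] GZ ZX ZY ZXY; have sZ := GZ.1.
have [x Xx nZx] := exists_notin_of_compl_in_union GZ sY ZX ZY ZXY.
have [y Yy nZy] := exists_notin_of_compl_in_union GZ sX ZY ZX (compl_in_unionC ZXY).
have YZx := sub_sumsp_span1_of_compl_in_union GZ ZXY Xx nZx.
have XZy := sub_sumsp_span1_of_compl_in_union GZ (compl_in_unionC ZXY) Yy nZy.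
have sZx := sumsp_subspace sZ (span1_subspace x).
have SZx : sumsp X Y `<=` sumsp Z (span1 x).
  apply: (sumsp_sub sZx _ YZx); apply: (subset_trans XZy).
  apply: (sumsp_sub sZx (sumsp_l (span1_subspace x))).
  by apply: span1_sub => //; apply: YZx.
have nYx : ~ Y x.
  by move=> Yx; apply: nZx; apply: (meet_sub_of_compl_in_union GZ ZXY).
have [W [GW Wx dZW]] := exists_complement_through GZ nZx.
have dYW : distant Y W.
  case: (ZXY W GW dZW) => // -[XW _].
  by case: nZx; rewrite (XW x Xx Wx); apply: subspace0.
have sS := sumsp_subspace sX sY.
apply: (quot_dim1_intro sS (sumsp_r sX) (sumsp_l sY Xx) nYx).
exact: sub_sumsp_of_distant sS (sumsp_r sX) dYW (distant_meet_span1 GW.1 dZW Wx SZx).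
Qed.

Lemma adjacent_of_compl_in_union Z X Y : inG X -> inG Y -> inG Z -> Z <> X -> Z <> Y ->
  compl_in_union Z X Y -> adjacent X Y.
Proof.
move=> GX GY GZ ZX ZY ZXY; split; last exact: quot_dim1_of_compl_in_union ZXY.
by rewrite sumspC; apply: quot_dim1_of_compl_in_union (compl_in_unionC ZXY).
Qed.

Section Pencil.
Variables (X Y : set V) (x y : V).
Hypotheses (GX : inG X) (GY : inG Y) (adjXY : adjacent X Y).
Hypotheses (Xx : X x) (nYx : ~ Y x) (Yy : Y y) (nXy : ~ X y).

Let sX : subspace X := GX.1.
Let sY : subspace Y := GY.1.
Let sS : subspace (sumsp X Y) := sumsp_subspace sX sY.
Let Z := sumsp (X `&` Y) (span1 (x + y)).

Lemma pencil_subspace : subspace Z.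
Proof. exact: sumsp_subspace (subspaceI sX sY) (span1_subspace _). Qed.

Lemma pencil_xy : Z (x + y).
Proof. exact: (sumsp_r (subspaceI sX sY) (span1_id (x + y))). Qed.

Lemma pencil_sub : Z `<=` sumsp X Y.
Proof.
apply: sumsp_sub => //; first by move=> v [Xv _]; apply: sumsp_l.
by apply: span1_sub => //; exists x, y.
Qed.

Lemma pencil_meet : X `&` Z `<=` Y.
Proof.
move=> v [Xv [p [_ [[Xp Yp] [c ->] ev]]]].
have Xcy : X (c *: y).
  have -> : c *: y = v - (p + c *: x) by rewrite ev scalerDr addrA [RHS]addrC addKr.
  by apply: subspaceB => //; apply: subspaceD => //; apply: subspaceZ.
by rewrite ev (notin_scale_eq0 sX nXy Xcy) scale0r addr0.
Qed.

Lemma pencil_notin_x : ~ Z x.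
Proof. by move=> Zx; apply/nYx/pencil_meet. Qed.

Lemma pencil_notin_y : ~ Z y.
Proof.
move=> Zy; apply: pencil_notin_x; rewrite -(addrK y x).
by apply: subspaceB pencil_subspace pencil_xy Zy.
Qed.

Lemma pencil_quot_dim1 : quot_dim1 (sumsp X Y) Z.
Proof.
have SXy := quot_dim1_span1 sX adjXY.1 (sumsp_r sX Yy) nXy.
have SYx := quot_dim1_span1 sY adjXY.2 (sumsp_l sY Xx) nYx.
have sZx := sumsp_subspace pencil_subspace (span1_subspace x).
apply: (quot_dim1_intro sS pencil_sub (sumsp_l sY Xx) pencil_notin_x).
rewrite SYx; apply: (sumsp_sub sZx); last exact: (sumsp_r pencil_subspace).
have YXy : Y `<=` sumsp X (span1 y) by rewrite -SXy; apply: sumsp_r.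
apply: (subset_trans (sub_sumsp_meet sY Yy YXy)); apply: (sumsp_sub sZx).
  by move=> v XYv; apply: (sumsp_l (span1_subspace x)); apply: (sumsp_l (span1_subspace _)).
apply: span1_sub => //; exists (x + y), (- x); split; first exact: pencil_xy.
  by exists (-1); rewrite scaleN1r.
by rewrite addrAC subrr add0r.
Qed.

Lemma pencil_inG : inG Z.
Proof.
have [W [GW Wy dXW]] := exists_complement_through GX nXy.
apply: (inG_complement GW pencil_subspace); apply: distantC.
exact: distant_exchange sX pencil_subspace GW.1 adjXY.1 pencil_quot_dim1 dXW Wy
  (sumsp_r sX Yy) nXy pencil_notin_y.
Qed.

Lemma pencil_compl_in_union : compl_in_union Z X Y.
Proof.
move=> W [sW _] dZW; have [z [w [Zz Ww ex]]] := dZW.2 x.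
have Sw : sumsp X Y w.
  have -> : w = x - z by rewrite ex addrC addKr.
  by apply: subspaceB => //; [apply: sumsp_l|apply: pencil_sub].
have nZw : ~ Z w.
  by move=> Zw; apply: pencil_notin_x; rewrite ex; apply: subspaceD pencil_subspace Zz Zw.
have [nXw|nYw] : ~ X w \/ ~ Y w.
  by apply/not_andP => XYw; apply/nZw/sumsp_l; [apply: span1_subspace|].
- left; exact: distant_exchange pencil_subspace sX sW pencil_quot_dim1 adjXY.1 dZW Ww Sw nZw nXw.
- right; exact: distant_exchange pencil_subspace sY sW pencil_quot_dim1 adjXY.2 dZW Ww Sw nZw nYw.
Qed.

Lemma exists_third_in_pencil : exists Z, [/\ inG Z, Z <> X, Z <> Y & compl_in_union Z X Y].
Proof.
exists Z; split; [exact: pencil_inG| | |exact: pencil_compl_in_union].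
- move=> ZX; have Xxy : X (x + y) by rewrite -ZX; apply: pencil_xy.
  by apply: nXy; rewrite -(addKr x y); apply: subspaceD => //; apply: subspaceN.
- move=> ZY; have Yxy : Y (x + y) by rewrite -ZY; apply: pencil_xy.
  by apply: nYx; rewrite -(addrK y x); apply: subspaceB.
Qed.

End Pencil.

Lemma compl_in_union_of_adjacent X Y : inG X -> inG Y -> adjacent X Y ->
  X <> Y /\ exists Z, [/\ inG Z, Z <> X, Z <> Y & compl_in_union Z X Y].
Proof.
move=> GX GY adjXY.
have [y Yy nXy] := quot_dim1_witness GX.1 adjXY.1.
have [x Xx nYx] : exists2 x, X x & ~ Y x.
  by apply: quot_dim1_witness GY.1 _; rewrite sumspC; apply: adjXY.2.
split; first by move=> XY; apply: nYx; rewrite -XY.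
exact: exists_third_in_pencil GX GY adjXY Xx nYx Yy nXy.
Qed.

End DivisionRing.
End Subspaces.

Section Gset.
Variables (K : unitRingType) (V : lmodType K).

Definition gdistant (X Y : Gset V) := distant (sval X) (sval Y).

Definition distant_adjacent (X Y : Gset V) := X <> Y /\ exists Z : Gset V,
  [/\ Z <> X, Z <> Y & forall W, gdistant Z W -> gdistant X W \/ gdistant Y W].

Lemma Gset_neq (X Y : Gset V) : X <> Y <-> sval X <> sval Y.
Proof.
split=> [XY eXY|XY eXY]; last by apply: XY; rewrite eXY.
by apply: XY; case: X Y eXY => [X GX] [Y GY] /= eXY; apply: eq_exist.
Qed.

Lemma adjacentE (hK : division_ring K) (X Y : Gset V) :
  adjacent (sval X) (sval Y) <-> distant_adjacent X Y.
Proof.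
case: X Y => [X GX] [Y GY]; split.
- move=> /(compl_in_union_of_adjacent hK GX GY) [XY [Z [GZ ZX ZY ZXY]]].
  split; first exact/Gset_neq.
  exists (exist _ Z GZ); split; [exact/Gset_neq|exact/Gset_neq|].
  by case=> W GW; apply: ZXY.
- move=> [_ [[Z GZ] [/Gset_neq ZX /Gset_neq ZY ZXY]]].
  apply: (adjacent_of_compl_in_union hK GX GY GZ ZX ZY) => W GW.
  exact: (ZXY (exist _ W GW)).
Qed.

End Gset.

Lemma distant_adjacent_bij (K K' : unitRingType) (V : lmodType K) (V' : lmodType K')
    (phi : Gset V -> Gset V') : bijective phi ->
  (forall X Y, gdistant X Y <-> gdistant (phi X) (phi Y)) ->
  forall X Y, distant_adjacent X Y <-> distant_adjacent (phi X) (phi Y).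
Proof.
case=> psi phiK psiK phi_dist.
have phi_neq A B : A <> B <-> phi A <> phi B.
  by split=> [AB /(can_inj phiK)//|nAB eAB]; apply: nAB; rewrite eAB.
move=> X Y; split=> -[XY [Z [ZX ZY ZXY]]]; split; try exact/phi_neq.
- exists (phi Z); split; try exact/phi_neq.
  by move=> W'; rewrite -(psiK W') -!phi_dist; apply: ZXY.
- exists (psi Z); split; try by apply/phi_neq; rewrite psiK.
  by move=> W; rewrite !phi_dist psiK; apply: ZXY.
Qed.

Theorem theorem4p1 (K K' : unitRingType) (V : lmodType K) (V' : lmodType K')
  (hK : division_ring K) (hK' : division_ring K')
  (hG : inhabited (Gset V)) (hG' : inhabited (Gset V'))
  (phi : Gset V -> Gset V') (phi_bij : bijective phi)
  (phi_dist : forall X Y : Gset V,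
      distant (proj1_sig X) (proj1_sig Y) <->
      distant (proj1_sig (phi X)) (proj1_sig (phi Y))) :
  forall X Y : Gset V,
    adjacent (proj1_sig X) (proj1_sig Y) <->
    adjacent (proj1_sig (phi X)) (proj1_sig (phi Y)).
Proof.
move=> X Y; rewrite (adjacentE hK) (adjacentE hK').
exact: distant_adjacent_bij phi_bij phi_dist X Y.
Qed.
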